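(* Let $\mathbb{K}\in\{\mathbb{R},\mathbb{C}\}$ and let $\mathcal{X}$ be a topological $\mathbb{K}$-vector space whose topological dual $\mathcal{X}^{\ast}$ separates the points of $\mathcal{X}$. Let $\mathcal{V}_1,\mathcal{V}_2\in\mathcal{C}$ be cylinders such that $\mathbf{B}_{\mathcal{V}_1}(\mathcal{X}^{\ast})\subsetneq\mathbf{B}_{\mathcal{V}_2}(\mathcal{X}^{\ast})$. Then for every $F_1\in\mathbf{B}_{\mathcal{V}_1}(\mathcal{X}^{\ast})$ and every $F_2\in\mathbf{B}_{\mathcal{V}_2}(\mathcal{X}^{\ast})\setminus\mathbf{B}_{\mathcal{V}_1}(\mathcal{X}^{\ast})$ there is $A\in\mathcal{X}$ with $d_H^{(A)}(F_1,F_2)=\infty$. In particular, for every $B\in\mathbf{B}(\mathcal{X}^{\ast})$ and every $F\in\mathbf{F}(\mathcal{X}^{\ast})\setminus\mathbf{B}(\mathcal{X}^{\ast})$ there is $A\in\mathcal{X}$ with $d_H^{(A)}(B,F)=\infty$.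
   Context: Topological vector spaces are Hausdorff (Rudin's definition). $\mathcal{X}^{\ast}$ carries the weak* topology $\sigma(\mathcal{X}^{\ast},\mathcal{X})$. $\mathbf{F}(\mathcal{X}^{\ast})$ is the set of nonempty weak*-closed subsets of $\mathcal{X}^{\ast}$. For $A\in\mathcal{X}$ and $F,\tilde F\in\mathbf{F}(\mathcal{X}^{\ast})$, $d_H^{(A)}(F,\tilde F)=\max\{\sup_{\sigma\in F}\inf_{\tilde\sigma\in\tilde F}|(\sigma-\tilde\sigma)(A)|,\ \sup_{\tilde\sigma\in\tilde F}\inf_{\sigma\in F}|(\sigma-\tilde\sigma)(A)|\}\in[0,\infty]$. For $A\in\mathcal{X}$ let $\mathcal{V}_A=\{\sigma\in\mathcal{X}^{\ast}:|\sigma(A)|<1\}$; the set of cylinders is $\mathcal{C}=\{\bigcap_{j=1}^n\mathcal{V}_{A_j}: n\in\mathbb{N},\ A_1,\dots,A_n\in\mathcal{X}\}$. For $\mathcal{V}\in\mathcal{C}$, $\mathbf{B}_{\mathcal{V}}(\mathcal{X}^{\ast})=\{B\in\mathbf{F}(\mathcal{X}^{\ast}): B\subseteq\lambda\mathcal{V}\text{ for some }\lambda>0\}$, and $\mathbf{B}(\mathcal{X}^{\ast})=\bigcap_{\mathcal{V}\in\mathcal{C}}\mathbf{B}_{\mathcal{V}}(\mathcal{X}^{\ast})$ (the nonempty bounded weak*-closed subsets). *)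

From HB Require Import structures.
From mathcomp Require Import all_boot all_order all_algebra.
From mathcomp Require Import all_classical all_reals all_analysis.
From mathcomp Require Export complex.
Export numFieldTopology.Exports.

Set Implicit Arguments.
Unset Strict Implicit.
Unset Printing Implicit Defensive.

Import Order.TTheory GRing.Theory Num.Theory.
Local Open Scope classical_set_scope.
Local Open Scope ring_scope.

Section Dual.
Variables (K : numFieldType) (X : topologicalLmodType K).

Definition dual : set (X -> K^o) :=
  [set f | (forall (a : K) (x y : X), f (a *: x + y) = a * f x + f y)
           /\ continuous f].

(* Weak*-closed subsets of Xdual: closed for the subspace topology that Xdual
   inherits from the topology of pointwise convergence on X -> K
   (i.e. sigma(Xdual, X)). *)
Definition weak_star_closed (F : set (X -> K^o)) : Prop :=
  F `<=` dual /\
  exists C : set {ptws X -> K^o}, closed C /\ F = C `&` dual.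

Definition FX : set (set (X -> K^o)) :=
  [set F | F !=set0 /\ weak_star_closed F].

Definition cylV (A : X) : set (X -> K^o) :=
  [set s | dual s /\ `|s A| < 1].

Definition cylinders : set (set (X -> K^o)) :=
  [set V | exists (n : nat) (A : 'I_n.+1 -> X),
             V = \bigcap_(j in [set: 'I_n.+1]) cylV (A j)].

Definition scale_set (l : K) (V : set (X -> K^o)) : set (X -> K^o) :=
  [set (fun x => l * s x) | s in V].

Definition BV (V : set (X -> K^o)) : set (set (X -> K^o)) :=
  [set B | FX B /\ exists l : K, 0 < l /\ B `<=` scale_set l V].

Definition BX : set (set (X -> K^o)) :=
  [set B | forall V, cylinders V -> BV V B].

(* d_H^{(A)}(F, G) in [0, +oo], where nrm : K -> R is the modulus of K. *)
Definition dH (R : realType) (nrm : K -> R) (A : X)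
    (F G : set (X -> K^o)) : \bar R :=
  maxe
    (ereal_sup [set ereal_inf [set (nrm (s A - t A))%:E | t in G] | s in F])
    (ereal_sup [set ereal_inf [set (nrm (s A - t A))%:E | s in F] | t in G]).

Definition dual_separates : Prop :=
  forall x y : X, x <> y -> exists s, dual s /\ s x <> s y.

End Dual.

From HB Require Import structures.
From mathcomp Require Import all_boot all_order all_algebra.
From mathcomp Require Import all_classical all_reals all_analysis.
From mathcomp Require Import complex.
From mathcomp Require Import lra.

Set Implicit Arguments.
Unset Strict Implicit.
Unset Printing Implicit Defensive.

Import numFieldTopology.Exports.
Import Order.TTheory GRing.Theory Num.Theory.
Local Open Scope classical_set_scope.
Local Open Scope ring_scope.

(* Write V = V_{A_1} /\ ... /\ V_{A_n}.  A set lies in B_V exactly when each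
   coordinate |sigma(A_j)| is bounded on it, so F1 in B_V is bounded on every
   A_j while F2 notin B_V is unbounded on some A_j.  Along that A_j, points of
   F2 move arbitrarily far from all of F1, so d_H^{(A_j)}(F1, F2) = oo. *)

Lemma exists_ubound_ord (R : numDomainType) (n : nat) (f : 'I_n -> R) :
  (forall j, 0 <= f j) -> exists2 L, 0 < L & forall j, f j < L.
Proof.
move=> f_ge0; exists (\sum_j f j + 1) => [|j].
  by rewrite ltr_wpDl ?sumr_ge0.
by rewrite (bigD1 j) //= -addrA ltrDl ltr_wpDl ?sumr_ge0.
Qed.

Section Cylinders.
Variables (K : numFieldType) (X : topologicalLmodType K).

Lemma dual_scale (c : K) (s : X -> K^o) : dual s -> dual (fun x => c * s x).
Proof.
case=> s_lin s_cont; split=> [a x y|x].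
  by rewrite s_lin mulrDr mulrCA.
exact: continuousM (@cst_continuous _ _ c x) (s_cont x).
Qed.

Lemma BV_bigcap_cylV (n : nat) (A : 'I_n.+1 -> X) (F : set (X -> K^o)) (l : K) :
  FX F -> 0 < l -> (forall j s, F s -> `|s (A j)| < l) ->
  BV (\bigcap_(j in [set: 'I_n.+1]) cylV (A j)) F.
Proof.
move=> FX_F l_gt0 F_lt; split=> //; exists l; split=> // s Fs.
have dual_s : dual s by case: FX_F => _ [+ _]; apply.
exists (fun x => l^-1 * s x); last first.
  by apply: funext => x; rewrite mulrA divff ?mul1r ?gt_eqF.
move=> j _; split; first exact: dual_scale.
change (`|l^-1 * s (A j) : K| < 1).
rewrite normrM normfV (gtr0_norm l_gt0) ltr_pdivrMl // mulr1.
exact: F_lt.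
Qed.

Lemma BV_bigcap_cylV_le (n : nat) (A : 'I_n.+1 -> X) (F : set (X -> K^o)) :
  BV (\bigcap_(j in [set: 'I_n.+1]) cylV (A j)) F ->
  exists2 l, 0 < l & forall j s, F s -> `|s (A j)| <= l.
Proof.
case=> _ [l [l_gt0 F_sub]]; exists l => // j _ /F_sub [u Vu <-].
rewrite normrM (gtr0_norm l_gt0) ler_piMr ?ltW //.
by case: (Vu j I).
Qed.

Lemma notBV_bigcap_cylV_unbounded (n : nat) (A : 'I_n.+1 -> X)
    (F : set (X -> K^o)) :
  FX F -> ~ BV (\bigcap_(j in [set: 'I_n.+1]) cylV (A j)) F ->
  exists j, forall l : K, 0 < l -> exists2 s, F s & l <= `|s (A j)|.
Proof.
move=> FX_F notBV; apply: contrapT => /forallNP bounded.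
have /choice [f f_bound] : forall j, exists l : K,
    0 < l /\ forall s, F s -> `|s (A j)| < l.
  move=> j; have /existsNP [l /not_implyP [l_gt0 no_s]] := bounded j.
  exists l; split=> // s Fs.
  rewrite real_ltNge ?normr_real ?gtr0_real //; apply/negP => l_le.
  by apply: no_s; exists s.
have [L L_gt0 f_lt] : exists2 L : K, 0 < L & forall j, f j < L.
  by apply: exists_ubound_ord => j; case: (f_bound j) => /ltW.
apply: notBV; apply: (BV_bigcap_cylV FX_F L_gt0) => j s Fs.
by case: (f_bound j) => _ /(_ s Fs) /lt_trans; apply.
Qed.

End Cylinders.

Definition modulus (K : numFieldType) (R : realType) (nrm : K -> R) :=
  [/\ forall a b, nrm a - nrm b <= nrm (a - b), forall z, nrm (- z) = nrm z,
      {homo nrm : z w / `|z| <= `|w| >-> z <= w}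
    & forall M, exists2 l : K, 0 < l & M <= nrm l].

Lemma modulus_norm (R : realType) : modulus (@Num.norm R R).
Proof.
split; [exact: lerB_dist | exact: normrN | by [] | move=> M].
exists (`|M| + 1); first by rewrite ltr_pwDr.
by rewrite ger0_norm ?addr_ge0 // (le_trans (ler_norm M)) ?lerDl.
Qed.

Lemma modulus_normc (R : realType) : modulus (@ComplexField.Normc.normc R).
Proof.
split=> [a b|||M].
- by rewrite lerBlDr -{1}(subrK b a) le_normcD.
- exact: normcN.
- by move=> z w; rewrite lecR.
exists (`|M| + 1)%:C%C; first by rewrite ltcR ltr_pwDr.
rewrite /ComplexField.Normc.normc /= expr0n addr0 sqrtr_sqr.
by rewrite ger0_norm ?addr_ge0 // (le_trans (ler_norm M)) ?lerDl.
Qed.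

Section HausdorffDistance.
Variables (K : numFieldType) (X : topologicalLmodType K).
Variables (R : realType) (nrm : K -> R).
Hypothesis nrmP : modulus nrm.

Lemma dH_pinfty (A : X) (F1 F2 : set (X -> K^o)) (b : R) :
  (forall t, F1 t -> nrm (t A) <= b) ->
  (forall M, exists2 s, F2 s & M <= nrm (s A)) ->
  dH nrm A F1 F2 = +oo%E.
Proof.
case: nrmP => nrmB nrmN _ _ F1_le F2_unbounded; rewrite /dH.
suff -> : ereal_sup [set ereal_inf [set (nrm (s A - t A))%:E | s in F1]
                    | t in F2] = +oo%E by rewrite maxey.
apply: eq_infty => M; have [t F2t Mt] := F2_unbounded (M + b).
apply: le_trans (ereal_sup_ubound (ex_intro2 _ _ t F2t erefl)).
apply/ereal_infP => _ [s F1s <-]; rewrite lee_fin -nrmN opprB.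
by have := nrmB (t A) (s A); have := F1_le s F1s; lra.
Qed.

Lemma dH_BV_notBV (V F1 F2 : set (X -> K^o)) :
  cylinders V -> BV V F1 -> FX F2 -> ~ BV V F2 ->
  exists A : X, dH nrm A F1 F2 = +oo%E.
Proof.
case: nrmP => _ _ nrm_homo nrm_unbounded [n [A ->]] BV_F1 FX_F2 notBV_F2.
have [l l_gt0 F1_le] := BV_bigcap_cylV_le BV_F1.
have [j F2_unbounded] := notBV_bigcap_cylV_unbounded FX_F2 notBV_F2.
exists (A j); apply: (@dH_pinfty _ _ _ (nrm l)) => [t F1t|M].
  by apply: nrm_homo; rewrite (gtr0_norm l_gt0); apply: F1_le.
have [k k_gt0 Mk] := nrm_unbounded M; have [s F2s ks] := F2_unbounded k k_gt0.
by exists s => //; apply: le_trans Mk (nrm_homo _ _ _); rewrite gtr0_norm.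
Qed.

Lemma dH_BX_notBX (B F : set (X -> K^o)) :
  BX B -> FX F -> ~ BX F -> exists A : X, dH nrm A B F = +oo%E.
Proof.
move=> BX_B FX_F /existsNP [V /not_implyP [cylV_V notBV]].
exact: dH_BV_notBV (BX_B V cylV_V) FX_F notBV.
Qed.

End HausdorffDistance.

Theorem proposition3p2 :
  (forall (R : realType) (X : topologicalLmodType R),
     hausdorff_space X -> dual_separates X ->
     (forall V1 V2 : set (X -> R^o),
        cylinders V1 -> cylinders V2 ->
        BV V1 `<` BV V2 ->
        forall F1 F2 : set (X -> R^o),
          BV V1 F1 -> BV V2 F2 -> ~ BV V1 F2 ->
          exists A : X, dH (@Num.norm R R) A F1 F2 = +oo%E) /\
     (forall B F : set (X -> R^o),
        BX B -> FX F -> ~ BX F ->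
        exists A : X, dH (@Num.norm R R) A B F = +oo%E)) /\
  (forall (R : realType) (X : topologicalLmodType R[i]),
     hausdorff_space X -> dual_separates X ->
     (forall V1 V2 : set (X -> R[i]^o),
        cylinders V1 -> cylinders V2 ->
        BV V1 `<` BV V2 ->
        forall F1 F2 : set (X -> R[i]^o),
          BV V1 F1 -> BV V2 F2 -> ~ BV V1 F2 ->
          exists A : X, dH (@ComplexField.Normc.normc R) A F1 F2 = +oo%E) /\
     (forall B F : set (X -> R[i]^o),
        BX B -> FX F -> ~ BX F ->
        exists A : X, dH (@ComplexField.Normc.normc R) A B F = +oo%E)).
Proof.
split=> R X _ _; split.
- move=> V1 V2 cylV1 _ _ F1 F2 BV_F1 [FX_F2 _].
  exact: (dH_BV_notBV (modulus_norm R) cylV1 BV_F1 FX_F2).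
- apply: dH_BX_notBX; exact: modulus_norm.
- move=> V1 V2 cylV1 _ _ F1 F2 BV_F1 [FX_F2 _].
  exact: (dH_BV_notBV (modulus_normc R) cylV1 BV_F1 FX_F2).
- apply: dH_BX_notBX; exact: modulus_normc.
Qed.
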